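(* Let $S$ be an atomic and simple relation algebra with finitely many atoms, and let $\# : S\to\mathbb{N}\cup\{\infty\}$ satisfy: $\#\bot=0$; $\#x=1$ for every atom $x$; $\#x+\#y=\#(x\sqcup y)+\#(x\sqcap y)$ for all $x,y\in S$; and $\#\top=(\#1)^2$. Then $S$ is atom-rectangular, and hence representable.
   Context: A Stone relation algebra is a structure $(S,\sqcup,\sqcap,\cdot,\overline{\,\cdot\,},{}^{\smile},\bot,\top,1)$ (write $xy$ for $x\cdot y$, $\overline{x}$ for the pseudocomplement, $x^{\smile}$ for the converse) such that: $(S,\sqcup,\sqcap,\bot,\top)$ is a bounded distributive lattice with order $x\sqsubseteq y\iff x\sqcup y=y$; $x\sqcap y=\bot\iff x\sqsubseteq\overline{y}$; $\overline{x}\sqcup\overline{\overline{x}}=\top$; $\cdot$ is associative with two-sided unit $1$, distributes over $\sqcup$ on both sides, and $\bot$ is a zero of $\cdot$; $x^{\smile\smile}=x$, $(xy)^{\smile}=y^{\smile}x^{\smile}$, $(x\sqcup y)^{\smile}=x^{\smile}\sqcup y^{\smile}$; $\overline{\overline{1}}=1$; $\overline{\overline{xy}}=\overline{\overline{x}}\,\overline{\overline{y}}$; $xy\sqcap z\sqsubseteq x(y\sqcap x^{\smile}z)$. A relation algebra is a Stone relation algebra with $\overline{\overline{x}}=x$ for all $x$; it is representable if it is isomorphic to an algebra of binary relations (on some base set) with the usual relational operations. An atom is an element $x\neq\bot$ such that $\bot\neq y\sqsubseteq x$ implies $y=x$. An element $x$ is a rectangle if $x\top x\sqsubseteq x$ and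 simple if $\top x\top=\top$. $S$ is simple if every element other than $\bot$ is simple; atomic if every $x\neq\bot$ has an atom below it; atom-rectangular if every atom is a rectangle. Arithmetic in $\mathbb{N}\cup\{\infty\}$ has $n+\infty=\infty+n=\infty$ and $\infty^2=\infty$. *)

From Stdlib Require Import List.
Import ListNotations.

Record StoneRA : Type := {
  car :> Type;
  sup : car -> car -> car;
  inf : car -> car -> car;
  comp : car -> car -> car;
  pc : car -> car;
  cnv : car -> car;
  bot : car; top : car; one : car;
  sup_assoc : forall x y z, sup x (sup y z) = sup (sup x y) z;
  sup_comm : forall x y, sup x y = sup y x;
  inf_assoc : forall x y z, inf x (inf y z) = inf (inf x y) z;
  inf_comm : forall x y, inf x y = inf y x;
  sup_absorb : forall x y, sup x (inf x y) = x;
  inf_absorb : forall x y, inf x (sup x y) = x;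
  inf_sup_distr : forall x y z, inf x (sup y z) = sup (inf x y) (inf x z);
  sup_bot : forall x, sup x bot = x;
  inf_top : forall x, inf x top = x;
  pc_spec : forall x y, inf x y = bot <-> sup x (pc y) = pc y;
  stone : forall x, sup (pc x) (pc (pc x)) = top;
  comp_assoc : forall x y z, comp x (comp y z) = comp (comp x y) z;
  comp_one_l : forall x, comp one x = x;
  comp_one_r : forall x, comp x one = x;
  comp_sup_l : forall x y z, comp (sup x y) z = sup (comp x z) (comp y z);
  comp_sup_r : forall x y z, comp x (sup y z) = sup (comp x y) (comp x z);
  comp_bot_l : forall x, comp bot x = bot;
  comp_bot_r : forall x, comp x bot = bot;
  cnv_invol : forall x, cnv (cnv x) = x;
  cnv_comp : forall x y, cnv (comp x y) = comp (cnv y) (cnv x);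
  cnv_sup : forall x y, cnv (sup x y) = sup (cnv x) (cnv y);
  pc_pc_one : pc (pc one) = one;
  pc_pc_comp : forall x y, pc (pc (comp x y)) = comp (pc (pc x)) (pc (pc y));
  dedekind : forall x y z,
    sup (inf (comp x y) z) (comp x (inf y (comp (cnv x) z)))
    = comp x (inf y (comp (cnv x) z))
}.

Section Defs.
Variable S : StoneRA.

Definition le (x y : S) : Prop := sup S x y = y.

Definition is_relation_algebra : Prop := forall x : S, pc S (pc S x) = x.

Definition atom (x : S) : Prop :=
  x <> bot S /\ forall y : S, y <> bot S -> le y x -> y = x.

Definition rectangle (x : S) : Prop := le (comp S (comp S x (top S)) x) x.

Definition simple_elt (x : S) : Prop := comp S (comp S (top S) x) (top S) = top S.

Definition simple_alg : Prop := forall x : S, x <> bot S -> simple_elt x.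

Definition atomic : Prop := forall x : S, x <> bot S -> exists a, atom a /\ le a x.

Definition atom_rectangular : Prop := forall x : S, atom x -> rectangle x.

Definition finitely_many_atoms : Prop := exists l : list S, forall a, atom a -> In a l.

(** Representability: an injective homomorphism into an algebra of binary
    relations on a base set X, whose top element is some relation E
    (necessarily an equivalence relation), with the usual relational operations
    (complement taken relative to E). *)
Definition representable : Prop :=
  exists (X : Type) (E : X -> X -> Prop) (f : S -> X -> X -> Prop),
    (forall x y, (forall a b, f x a b <-> f y a b) -> x = y) /\
    (forall x y a b, f (sup S x y) a b <-> (f x a b \/ f y a b)) /\
    (forall x y a b, f (inf S x y) a b <-> (f x a b /\ f y a b)) /\
    (forall x y a b, f (comp S x y) a b <-> exists c, f x a c /\ f y c b) /\
    (forall x a b, f (pc S x) a b <-> (E a b /\ ~ f x a b)) /\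
    (forall x a b, f (cnv S x) a b <-> f x b a) /\
    (forall a b, f (bot S) a b <-> False) /\
    (forall a b, f (top S) a b <-> E a b) /\
    (forall a b, f (one S) a b <-> (a = b /\ E a b)).

End Defs.

Inductive natinf : Type := Fin (n : nat) | Inf.

Definition ni_add (m n : natinf) : natinf :=
  match m, n with Fin a, Fin b => Fin (a + b) | _, _ => Inf end.

Definition ni_sq (m : natinf) : natinf :=
  match m with Fin a => Fin (a * a) | Inf => Inf end.

(* Let P be the list of atoms below 1; atomicity gives 1 = ⊔P. Simplicity makes every
   block p⊤q (p, q ∈ P) nonzero, blocks with different indices are disjoint, and they join
   to ⊤ = 1⊤1. As #⊤ = (#1)² = |P|² is finite, # is finite everywhere, additive on disjoint
   joins and at least 1 on nonzero elements; so the |P|² blocks all have count 1 and are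
   atoms. Every atom lies below, hence equals, some block, and blocks are rectangles.
   Finally x ↦ {(p, q) | p⊤q ⊑ x} is a representation of S on the base set P. *)

From Stdlib Require Import List Classical ClassicalEpsilon ProofIrrelevance Lia.
Import ListNotations.

Arguments sup {s}. Arguments inf {s}. Arguments comp {s}. Arguments pc {s}.
Arguments cnv {s}. Arguments bot {s}. Arguments top {s}. Arguments one {s}.
Arguments le {S}. Arguments atom {S}.

Lemma list_sum_map_one {A : Type} (l : list A) : list_sum (map (fun _ => 1) l) = length l.
Proof. induction l as [|a l IH]; simpl; lia. Qed.

Lemma length_le_list_sum {A : Type} (f : A -> nat) (l : list A) :
  (forall a, In a l -> 1 <= f a) -> length l <= list_sum (map f l).
Proof.
  induction l as [|b l IH]; simpl; intros Hpos; [lia|].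
  assert (1 <= f b) by auto. assert (length l <= list_sum (map f l)) by auto. lia.
Qed.

Lemma map_eq_one_of_list_sum {A : Type} (f : A -> nat) (l : list A) :
  (forall a, In a l -> 1 <= f a) -> list_sum (map f l) <= length l ->
  forall a, In a l -> f a = 1.
Proof.
  induction l as [|b l IH]; simpl; intros Hpos Hsum a Ha; [contradiction|].
  assert (1 <= f b) by auto.
  assert (length l <= list_sum (map f l)) by (apply length_le_list_sum; auto).
  destruct Ha as [<-|Ha]; [lia|]. apply IH; auto. lia.
Qed.

Lemma NoDup_list_prod {A B : Type} (l : list A) (l' : list B) :
  NoDup l -> NoDup l' -> NoDup (list_prod l l').
Proof.
  intros Hl Hl'. induction Hl as [|a l Ha Hl IH]; simpl; [constructor|].
  apply NoDup_app; auto.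
  - apply NoDup_map_NoDup_ForallPairs; auto. intros x y _ _ E. congruence.
  - intros [x y] Hxy Hin. apply in_map_iff in Hxy as [z [E _]]. injection E as <- _.
    apply in_prod_iff in Hin. tauto.
Qed.

Lemma finite_subset_NoDup {A : Type} (Q : A -> Prop) (l : list A) :
  (forall a, Q a -> In a l) -> exists P, NoDup P /\ forall a, In a P <-> Q a.
Proof.
  intros Hl.
  set (dec := fun x y : A => excluded_middle_informative (x = y)).
  set (q := fun a => if excluded_middle_informative (Q a) then true else false).
  exists (nodup dec (filter q l)). split; [apply NoDup_nodup|].
  intro a. rewrite nodup_In, filter_In. unfold q.
  destruct (excluded_middle_informative (Q a)) as [HQ|HQ].
  - split; [tauto | auto].
  - split; [intros [_ E]; discriminate | contradiction].
Qed.

Section Lattice.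
Context {S : StoneRA}.
Implicit Types x y z a : S.

Lemma sup_idem x : sup x x = x.
Proof. rewrite <- (inf_absorb S x x) at 2. apply sup_absorb. Qed.

Lemma inf_idem x : inf x x = x.
Proof. rewrite <- (sup_idem x) at 2. apply inf_absorb. Qed.

Lemma le_refl x : le x x.
Proof. apply sup_idem. Qed.

Lemma le_trans x y z : le x y -> le y z -> le x z.
Proof. unfold le; intros Hxy Hyz. rewrite <- Hyz, sup_assoc, Hxy. reflexivity. Qed.

Lemma le_antisym x y : le x y -> le y x -> x = y.
Proof. unfold le; intros Hxy Hyx. rewrite <- Hxy, sup_comm. symmetry. exact Hyx. Qed.

Lemma le_iff_inf x y : le x y <-> inf x y = x.
Proof.
  unfold le; split; intro H.
  - rewrite <- H. apply inf_absorb.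
  - rewrite <- H, sup_comm, inf_comm. apply sup_absorb.
Qed.

Lemma le_supl x y : le x (sup x y).
Proof. unfold le. rewrite sup_assoc, sup_idem. reflexivity. Qed.

Lemma le_supr x y : le y (sup x y).
Proof. rewrite sup_comm. apply le_supl. Qed.

Lemma le_infl x y : le (inf x y) x.
Proof. apply le_iff_inf. rewrite inf_comm, inf_assoc, inf_idem. reflexivity. Qed.

Lemma le_infr x y : le (inf x y) y.
Proof. rewrite inf_comm. apply le_infl. Qed.

Lemma sup_lub x y z : le x z -> le y z -> le (sup x y) z.
Proof. unfold le; intros Hx Hy. rewrite <- sup_assoc, Hy, Hx. reflexivity. Qed.

Lemma inf_glb x y z : le z x -> le z y -> le z (inf x y).
Proof. rewrite !le_iff_inf; intros Hx Hy. rewrite inf_assoc, Hx, Hy. reflexivity. Qed.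

Lemma bot_le x : le bot x.
Proof. unfold le. rewrite sup_comm. apply sup_bot. Qed.

Lemma le_top x : le x top.
Proof. apply le_iff_inf, inf_top. Qed.

Lemma le_bot_eq x : le x bot -> x = bot.
Proof. intro H. apply le_antisym; [exact H | apply bot_le]. Qed.

Lemma inf_bot x : inf x bot = bot.
Proof. apply le_bot_eq, le_infr. Qed.

Lemma inf_pc x : inf x (pc x) = bot.
Proof. rewrite inf_comm. apply pc_spec, le_refl. Qed.

Lemma inf_inf_pc x y : inf x (inf y (pc x)) = bot.
Proof. rewrite inf_comm, <- inf_assoc, (inf_comm S (pc x)), inf_pc. apply inf_bot. Qed.

Lemma le_pc_eq_bot x y : le x y -> le x (pc y) -> x = bot.
Proof. intros Hy Hpc. apply le_bot_eq. rewrite <- (inf_pc y). apply inf_glb; assumption. Qed.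

Section Boolean.
Hypothesis RA : is_relation_algebra S.

Lemma sup_pc x : sup x (pc x) = top.
Proof. rewrite <- (stone S x), RA, sup_comm. reflexivity. Qed.

Lemma le_of_inf_pc_bot x y : inf x (pc y) = bot -> le x y.
Proof. intro H. apply pc_spec in H. rewrite RA in H. exact H. Qed.

Lemma sup_inf_pc_eq a x : le a x -> sup a (inf x (pc a)) = x.
Proof.
  intro H. rewrite <- (inf_top S x) at 2. rewrite <- (sup_pc a), inf_sup_distr.
  rewrite (inf_comm S x a). apply le_iff_inf in H. rewrite H. reflexivity.
Qed.

End Boolean.
End Lattice.

Section Composition.
Context {S : StoneRA}.
Implicit Types x y z p q : S.

Lemma comp_mono_l z x y : le x y -> le (comp x z) (comp y z).
Proof. unfold le; intro H. rewrite <- comp_sup_l, H. reflexivity. Qed.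

Lemma comp_mono_r z x y : le x y -> le (comp z x) (comp z y).
Proof. unfold le; intro H. rewrite <- comp_sup_r, H. reflexivity. Qed.

Lemma comp_mono x y x' y' : le x x' -> le y y' -> le (comp x y) (comp x' y').
Proof. intros. apply le_trans with (comp x' y); [apply comp_mono_l | apply comp_mono_r]; assumption. Qed.

Lemma cnv_mono x y : le x y -> le (cnv x) (cnv y).
Proof. unfold le; intro H. rewrite <- cnv_sup, H. reflexivity. Qed.

Lemma le_cnv_iff x y : le x (cnv y) <-> le (cnv x) y.
Proof.
  split; intro H.
  - rewrite <- (cnv_invol S y). apply cnv_mono, H.
  - rewrite <- (cnv_invol S x). apply cnv_mono, H.
Qed.

Lemma cnv_bot : cnv (@bot S) = bot.
Proof. apply le_bot_eq, le_cnv_iff, bot_le. Qed.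

Lemma cnv_top : cnv (@top S) = top.
Proof. apply le_antisym; [apply le_top | apply le_cnv_iff, le_top]. Qed.

Lemma cnv_inf x y : cnv (inf x y) = inf (cnv x) (cnv y).
Proof.
  apply le_antisym.
  - apply inf_glb; apply cnv_mono; [apply le_infl | apply le_infr].
  - apply le_cnv_iff. apply inf_glb; apply le_cnv_iff; [apply le_infl | apply le_infr].
Qed.

Lemma sub_le_cnv p : le p one -> le p (cnv p).
Proof.
  intro Hp. assert (D := dedekind S p one p). rewrite comp_one_r, inf_idem in D.
  apply le_trans with (comp p (inf one (comp (cnv p) p))); [exact D|].
  apply le_trans with (comp one (comp (cnv p) one)).
  - apply comp_mono; [exact Hp|]. eapply le_trans; [apply le_infr | apply comp_mono_r, Hp].
  - rewrite comp_one_l, comp_one_r. apply le_refl.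
Qed.

Lemma sub_cnv p : le p one -> cnv p = p.
Proof.
  intro Hp. apply le_antisym; [apply le_cnv_iff|]; apply sub_le_cnv, Hp.
Qed.

Lemma comp_le_l x p : le p one -> le (comp x p) x.
Proof. intro Hp. rewrite <- (comp_one_r S x) at 2. apply comp_mono_r, Hp. Qed.

Lemma comp_le_r x p : le p one -> le (comp p x) x.
Proof. intro Hp. rewrite <- (comp_one_l S x) at 2. apply comp_mono_l, Hp. Qed.

Lemma sub_idem p : le p one -> comp p p = p.
Proof.
  intro Hp. apply le_antisym; [apply comp_le_l, Hp|].
  assert (D := dedekind S p one p). rewrite comp_one_r, inf_idem, sub_cnv in D by exact Hp.
  eapply le_trans; [exact D|]. apply comp_mono_r.
  eapply le_trans; [apply le_infr | apply comp_le_l, Hp].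
Qed.

Lemma sub_comp_le_inf p q : le p one -> le q one -> le (comp p q) (inf p q).
Proof. intros Hp Hq. apply inf_glb; [apply comp_le_l | apply comp_le_r]; assumption. Qed.

End Composition.

Definition subid_atom {S : StoneRA} (p : S) : Prop := atom p /\ le p one.

Section Atoms.
Context {S : StoneRA}.
Implicit Types x y a b : S.

Lemma atom_meet a x : atom a -> inf a x <> bot -> le a x.
Proof. intros [_ Ha] H. apply le_iff_inf, Ha; [exact H | apply le_infl]. Qed.

Lemma atom_disj a x : atom a -> ~ le a x -> inf a x = bot.
Proof.
  intros Ha H. apply NNPP. intro C. exact (H (atom_meet a x Ha C)).
Qed.

Lemma atoms_disj a b : atom a -> atom b -> a <> b -> inf a b = bot.
Proof.
  intros Ha Hb Hne. apply NNPP. intro C. apply Hne.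
  exact (proj2 Hb a (proj1 Ha) (atom_meet a b Ha C)).
Qed.

Lemma atom_le_pc a x : atom a -> (le a (pc x) <-> ~ le a x).
Proof.
  intros Ha. split.
  - intros Hpc Hx. exact (proj1 Ha (le_pc_eq_bot a x Hx Hpc)).
  - intro H. apply pc_spec, atom_disj; assumption.
Qed.

Lemma atom_le_sup a x y : atom a -> (le a (sup x y) <-> le a x \/ le a y).
Proof.
  intros Ha. split.
  - intro H. destruct (classic (le a x)) as [Hx|Hx]; [left; exact Hx | right].
    apply le_iff_inf in H. rewrite inf_sup_distr, (atom_disj a x Ha Hx), sup_comm, sup_bot in H.
    apply le_iff_inf, H.
  - intros [H|H]; eapply le_trans; eauto using le_supl, le_supr.
Qed.

Lemma le_of_atoms (AT : atomic S) (RA : is_relation_algebra S) x y :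
  (forall a, atom a -> le a x -> le a y) -> le x y.
Proof.
  intro H. apply le_of_inf_pc_bot; [exact RA|]. apply NNPP. intro C.
  destruct (AT _ C) as [a [Ha Hle]].
  apply (proj1 Ha), (le_pc_eq_bot a y).
  - apply H; [exact Ha | eapply le_trans; [exact Hle | apply le_infl]].
  - eapply le_trans; [exact Hle | apply le_infr].
Qed.

End Atoms.

Fixpoint bigsup {S : StoneRA} (l : list S) : S :=
  match l with [] => bot | a :: l => sup a (bigsup l) end.

Section Bigsup.
Context {S : StoneRA}.
Implicit Types (x z a : S) (l : list S).

Lemma bigsup_in l x : In x l -> le x (bigsup l).
Proof.
  induction l as [|b l IH]; simpl; [tauto|]. intros [<-|H].
  - apply le_supl.
  - eapply le_trans; [apply IH, H | apply le_supr].
Qed.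

Lemma bigsup_lub l z : (forall x, In x l -> le x z) -> le (bigsup l) z.
Proof.
  induction l as [|b l IH]; simpl; intro H; [apply bot_le|]. apply sup_lub; auto.
Qed.

Lemma inf_bigsup_bot l z : (forall x, In x l -> inf z x = bot) -> inf z (bigsup l) = bot.
Proof.
  induction l as [|b l IH]; simpl; intro H; [apply inf_bot|].
  rewrite inf_sup_distr, H, IH, sup_bot; auto.
Qed.

Lemma comp_bigsup_l l z : comp (bigsup l) z = bigsup (map (fun x => comp x z) l).
Proof. induction l as [|b l IH]; simpl; [apply comp_bot_l | rewrite comp_sup_l, IH; reflexivity]. Qed.

Lemma comp_bigsup_r l z : comp z (bigsup l) = bigsup (map (comp z) l).
Proof. induction l as [|b l IH]; simpl; [apply comp_bot_r | rewrite comp_sup_r, IH; reflexivity]. Qed.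

Lemma bigsup_nonbot l : bigsup l <> bot -> exists x, In x l /\ x <> bot.
Proof.
  intro H. apply NNPP. intro C. apply H, le_bot_eq, bigsup_lub.
  intros x Hx. destruct (classic (x = bot)) as [->|Hne]; [apply le_refl|].
  exfalso. eauto.
Qed.

Lemma atom_le_bigsup l a : atom a -> le a (bigsup l) -> exists x, In x l /\ le a x.
Proof.
  intro Ha. induction l as [|b l IH]; simpl; intro H.
  - exact (False_ind _ (proj1 Ha (le_bot_eq a H))).
  - apply (atom_le_sup a b (bigsup l) Ha) in H as [H|H]; [eauto|].
    destruct (IH H) as [x [Hx Hax]]. eauto.
Qed.

End Bigsup.

Definition block {S : StoneRA} (p q : S) : S := comp (comp p top) q.

Section Blocks.
Context {S : StoneRA}.
Implicit Types x p q r : S.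

Lemma block_rectangle p q : rectangle S (block p q).
Proof.
  unfold rectangle, block.
  replace (comp (comp (comp (comp p top) q) top) (comp (comp p top) q))
    with (comp (comp p (comp (comp top (comp q (comp top p))) top)) q)
    by (rewrite !comp_assoc; reflexivity).
  apply comp_mono_l, comp_mono_r, le_top.
Qed.

Lemma block_cnv p q : le p one -> le q one -> cnv (block p q) = block q p.
Proof.
  intros Hp Hq. unfold block.
  rewrite !cnv_comp, cnv_top, (sub_cnv p Hp), (sub_cnv q Hq), comp_assoc. reflexivity.
Qed.

Lemma block_sandwich p q : le p one -> le q one -> comp (comp p (block p q)) q = block p q.
Proof.
  intros Hp Hq. unfold block.
  rewrite !comp_assoc, (sub_idem p Hp), <- (comp_assoc S _ q q), (sub_idem q Hq). reflexivity.
Qed.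

Lemma comp_top_disj p p' : le p one -> le p' one -> inf p p' = bot ->
  inf (comp p top) (comp p' top) = bot.
Proof.
  intros Hp Hp' D. apply le_bot_eq.
  eapply le_trans; [apply dedekind|]. rewrite (sub_cnv p Hp), comp_assoc.
  assert (E : comp p p' = bot) by (apply le_bot_eq; rewrite <- D; apply sub_comp_le_inf; assumption).
  rewrite E, comp_bot_l, inf_bot, comp_bot_r. apply le_refl.
Qed.

Lemma block_disj_row p q p' q' : le p one -> le q one -> le p' one -> le q' one ->
  inf p p' = bot -> inf (block p q) (block p' q') = bot.
Proof.
  intros Hp Hq Hp' Hq' D. apply le_bot_eq. rewrite <- (comp_top_disj p p' Hp Hp' D).
  apply inf_glb; [eapply le_trans; [apply le_infl|] | eapply le_trans; [apply le_infr|]];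
    apply comp_le_l; assumption.
Qed.

Lemma block_disj p q p' q' : le p one -> le q one -> le p' one -> le q' one ->
  inf p p' = bot \/ inf q q' = bot -> inf (block p q) (block p' q') = bot.
Proof.
  intros Hp Hq Hp' Hq' [D|D]; [apply block_disj_row; assumption|].
  rewrite <- (cnv_invol S (inf _ _)), cnv_inf, !block_cnv, block_disj_row by assumption.
  apply cnv_bot.
Qed.

Section Simple.
Hypothesis SI : simple_alg S.

Lemma block_nonbot p q : p <> bot -> q <> bot -> block p q <> bot.
Proof.
  intros Hp Hq E. apply Hp, le_bot_eq.
  assert (Erow : comp p top = comp (block p q) top).
  { unfold block. rewrite <- (SI q Hq) at 1. unfold simple_elt. rewrite !comp_assoc. reflexivity. }
  rewrite <- (comp_one_r S p) at 1.
  replace (@bot S) with (comp (block p q) top) by (rewrite E; apply comp_bot_l).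
  rewrite <- Erow. apply comp_mono_r, le_top.
Qed.

Lemma block_comp p q r : le r one -> r <> bot -> comp (block p r) (block r q) = block p q.
Proof.
  intros Hr Hr0.
  replace (comp (block p r) (block r q)) with (comp (comp p (comp (comp top (comp r r)) top)) q)
    by (unfold block; rewrite !comp_assoc; reflexivity).
  rewrite (sub_idem r Hr), (SI r Hr0). reflexivity.
Qed.

End Simple.

Lemma block_le_iff p q x : atom (block p q) -> le p one -> le q one ->
  (le (block p q) x <-> comp (comp p x) q <> bot).
Proof.
  intros Hb Hp Hq. split.
  - intros Hx E. apply (proj1 Hb), le_bot_eq. rewrite <- E, <- (block_sandwich p q Hp Hq).
    apply comp_mono_l, comp_mono_r, Hx.
  - intro Hne.
    assert (Hsub : le (comp (comp p x) q) (block p q)) by apply comp_mono_l, comp_mono_r, le_top.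
    rewrite <- (proj2 Hb _ Hne Hsub).
    eapply le_trans; [apply comp_le_l, Hq | apply comp_le_r, Hp].
Qed.

End Blocks.

(* The junk value 0 at [Inf] never matters: see [cnt_Fin]. *)
Definition cnt_nat {S : StoneRA} (cnt : S -> natinf) (x : S) : nat :=
  match cnt x with Fin k => k | Inf => 0 end.

Section Counting.
Context {S : StoneRA} (cnt : S -> natinf).
Hypothesis cnt_bot : cnt bot = Fin 0.
Hypothesis cnt_modular :
  forall x y : S, ni_add (cnt x) (cnt y) = ni_add (cnt (sup x y)) (cnt (inf x y)).

Lemma cnt_sup_disj (x y : S) : inf x y = bot -> cnt (sup x y) = ni_add (cnt x) (cnt y).
Proof.
  intro D. rewrite cnt_modular, D, cnt_bot.
  destruct (cnt (sup x y)); simpl; [f_equal; lia | reflexivity].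
Qed.

Lemma cnt_bigsup {A : Type} (g : A -> S) (h : A -> nat) (L : list A) :
  NoDup L -> (forall a b, In a L -> In b L -> a <> b -> inf (g a) (g b) = bot) ->
  (forall a, In a L -> cnt (g a) = Fin (h a)) ->
  cnt (bigsup (map g L)) = Fin (list_sum (map h L)).
Proof.
  intro ND. induction ND as [|a L Ha ND IH]; simpl; intros Hdisj Hcnt; [exact cnt_bot|].
  rewrite cnt_sup_disj, Hcnt, IH; simpl; auto.
  apply inf_bigsup_bot. intros x Hx. apply in_map_iff in Hx as [b [<- Hb]].
  apply Hdisj; simpl; auto. intros ->. contradiction.
Qed.

Section FiniteTop.
Hypothesis RA : is_relation_algebra S.
Hypothesis AT : atomic S.
Hypothesis cnt_atom : forall x : S, atom x -> cnt x = Fin 1.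
Variable m : nat.
Hypothesis cnt_top : cnt top = Fin m.

Lemma cnt_Fin (x : S) : cnt x = Fin (cnt_nat cnt x).
Proof.
  assert (E := cnt_modular x (pc x)). rewrite sup_pc, inf_pc, cnt_top, cnt_bot in E by exact RA.
  unfold cnt_nat. destruct (cnt x); [reflexivity | discriminate].
Qed.

Lemma cnt_nat_sup_disj (x y : S) : inf x y = bot ->
  cnt_nat cnt (sup x y) = cnt_nat cnt x + cnt_nat cnt y.
Proof.
  intro D. assert (E := cnt_sup_disj x y D). rewrite !cnt_Fin in E. injection E. auto.
Qed.

Lemma cnt_nat_pos (x : S) : x <> bot -> 1 <= cnt_nat cnt x.
Proof.
  intro Hx. destruct (AT x Hx) as [a [Ha Hax]].
  rewrite <- (sup_inf_pc_eq RA a x Hax), cnt_nat_sup_disj.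
  - unfold cnt_nat at 1. rewrite cnt_atom by exact Ha. lia.
  - apply inf_inf_pc.
Qed.

Lemma atom_of_cnt_nat_1 (x : S) : cnt_nat cnt x = 1 -> atom x.
Proof.
  intro H1. split.
  { intros ->. unfold cnt_nat in H1. rewrite cnt_bot in H1. discriminate. } intros y Hy Hyx.
  rewrite <- (sup_inf_pc_eq RA y x Hyx), cnt_nat_sup_disj in H1.
  - assert (1 <= cnt_nat cnt y) by (apply cnt_nat_pos, Hy).
    assert (R : inf x (pc y) = bot) by (apply NNPP; intro C; apply cnt_nat_pos in C; lia).
    apply le_antisym; [exact Hyx | apply le_of_inf_pc_bot; assumption].
  - apply inf_inf_pc.
Qed.

End FiniteTop.
End Counting.

Definition point (S : StoneRA) : Type := {p : S | subid_atom p}.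

Definition rep {S : StoneRA} (x : S) (a b : point S) : Prop :=
  le (block (proj1_sig a) (proj1_sig b)) x.

Section SubidentityAtoms.
Context {S : StoneRA}.
Hypothesis RA : is_relation_algebra S.
Hypothesis AT : atomic S.
Variable P : list S.
Hypothesis P_spec : forall p, In p P <-> subid_atom p.

Let P_atom p : In p P -> atom p.
Proof. intro Hp. apply P_spec, Hp. Qed.

Let P_sub p : In p P -> le p one.
Proof. intro Hp. apply P_spec, Hp. Qed.

Let P_disj p p' : In p P -> In p' P -> p <> p' -> inf p p' = bot.
Proof. intros Hp Hp'. apply atoms_disj; apply P_atom; assumption. Qed.

Lemma one_bigsup : one = bigsup P.
Proof.
  apply le_antisym; [|apply bigsup_lub; exact P_sub].
  apply le_of_atoms; [exact AT | exact RA |]. intros a Ha Ha1.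
  apply bigsup_in, P_spec. split; assumption.
Qed.

Lemma comp_bigsup_one (u v : S) : comp u v = bigsup (map (fun r => comp (comp u r) (comp r v)) P).
Proof.
  rewrite <- (comp_one_l S v) at 1. rewrite one_bigsup, comp_bigsup_l, comp_bigsup_r, map_map.
  f_equal. apply map_ext_in. intros r Hr.
  rewrite <- (sub_idem r (P_sub r Hr)) at 1. rewrite !comp_assoc. reflexivity.
Qed.

Lemma top_bigsup_blocks : top = bigsup (map (fun pq => block (fst pq) (snd pq)) (list_prod P P)).
Proof.
  apply le_antisym; [|apply le_top].
  apply le_trans with (comp (comp (bigsup P) top) (bigsup P)).
  { rewrite <- one_bigsup, comp_one_l, comp_one_r. apply le_refl. }
  rewrite comp_bigsup_r, comp_bigsup_l. apply bigsup_lub. intros x Hx.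
  apply in_map_iff in Hx as [q [<- Hq]]. rewrite comp_bigsup_l, map_map. apply bigsup_lub.
  intros x Hx. apply in_map_iff in Hx as [p [<- Hp]].
  apply bigsup_in, in_map_iff. exists (p, q). split; [reflexivity | apply in_prod_iff; auto].
Qed.

Lemma atom_le_block (a : S) : atom a ->
  exists p q, subid_atom p /\ subid_atom q /\ le a (block p q).
Proof.
  intros Ha.
  assert (Htop : le a (bigsup (map (fun pq => block (fst pq) (snd pq)) (list_prod P P))))
    by (rewrite <- top_bigsup_blocks; apply le_top).
  destruct (atom_le_bigsup _ a Ha Htop) as [x [Hx Hax]].
  apply in_map_iff in Hx as [[p q] [<- Hpq]]. apply in_prod_iff in Hpq as [Hp Hq].
  exists p, q. rewrite <- !P_spec. auto.
Qed.

Section BlocksAreAtoms.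
Variable cnt : S -> natinf.
Hypothesis SI : simple_alg S.
Hypothesis P_NoDup : NoDup P.
Hypothesis cnt_bot : cnt bot = Fin 0.
Hypothesis cnt_atom : forall x : S, atom x -> cnt x = Fin 1.
Hypothesis cnt_modular :
  forall x y : S, ni_add (cnt x) (cnt y) = ni_add (cnt (sup x y)) (cnt (inf x y)).
Hypothesis cnt_top : cnt top = ni_sq (cnt one).

Lemma cnt_one : cnt one = Fin (length P).
Proof.
  rewrite one_bigsup, <- (map_id P) at 1. rewrite <- list_sum_map_one.
  apply cnt_bigsup; auto.
Qed.

Lemma subid_atom_block_atom (p q : S) : subid_atom p -> subid_atom q -> atom (block p q).
Proof.
  set (n := length P). set (g := fun pq : S * S => block (fst pq) (snd pq)).
  assert (cnt_top_n : cnt top = Fin (n * n)) by (rewrite cnt_top, cnt_one; reflexivity).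
  assert (Hsum : n * n = list_sum (map (fun pq => cnt_nat cnt (g pq)) (list_prod P P))).
  { enough (E : cnt top = Fin (list_sum (map (fun pq => cnt_nat cnt (g pq)) (list_prod P P))))
      by (rewrite cnt_top_n in E; injection E; auto).
    rewrite top_bigsup_blocks at 1. apply cnt_bigsup; auto.
    - apply NoDup_list_prod; assumption.
    - intros [p1 q1] [p2 q2] H1 H2 Hne.
      apply in_prod_iff in H1 as [Hp1 Hq1]. apply in_prod_iff in H2 as [Hp2 Hq2].
      apply block_disj; try apply P_sub; try assumption.
      destruct (classic (p1 = p2)) as [<-|Hp]; [right | left]; apply P_disj; simpl; auto.
      intros ->. contradiction.
    - intros pq _. apply (cnt_Fin cnt cnt_bot cnt_modular RA _ cnt_top_n). }
  intros Hp Hq. apply (atom_of_cnt_nat_1 cnt cnt_bot cnt_modular RA AT cnt_atom _ cnt_top_n).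
  apply (map_eq_one_of_list_sum (fun pq => cnt_nat cnt (g pq)) (list_prod P P)) with (a := (p, q)).
  - intros [p' q'] H. apply in_prod_iff in H as [Hp' Hq'].
    apply (cnt_nat_pos cnt cnt_bot cnt_modular RA AT cnt_atom _ cnt_top_n).
    apply block_nonbot; [exact SI | apply P_atom, Hp' | apply P_atom, Hq'].
  - rewrite length_prod. lia.
  - apply in_prod_iff. split; apply P_spec; assumption.
Qed.

End BlocksAreAtoms.

Section Representation.
Hypothesis SI : simple_alg S.
Hypothesis block_atom : forall p q : S, subid_atom p -> subid_atom q -> atom (block p q).

Lemma atom_eq_block (a : S) : atom a ->
  exists p q, subid_atom p /\ subid_atom q /\ a = block p q.
Proof.
  intro Ha. destruct (atom_le_block a Ha) as [p [q [Hp [Hq Hle]]]].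
  exists p, q. split; [exact Hp | split; [exact Hq |]].
  exact (proj2 (block_atom p q Hp Hq) a (proj1 Ha) Hle).
Qed.

Lemma atom_rectangular_of_block_atoms : atom_rectangular S.
Proof.
  intros a Ha. destruct (atom_eq_block a Ha) as [p [q [_ [_ ->]]]]. apply block_rectangle.
Qed.

Implicit Types (x y : S) (a b c : point S).

Lemma rep_iff x a b : rep x a b <-> comp (comp (proj1_sig a) x) (proj1_sig b) <> bot.
Proof.
  destruct a as [p Hp], b as [q Hq]. apply block_le_iff; [apply block_atom | apply Hp | apply Hq];
    assumption.
Qed.

Lemma rep_atom a b : atom (block (proj1_sig a) (proj1_sig b)).
Proof. apply block_atom; [apply (proj2_sig a) | apply (proj2_sig b)]. Qed.

Lemma rep_le x y : (forall a b, rep x a b -> rep y a b) -> le x y.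
Proof.
  intro H. apply le_of_atoms; [exact AT | exact RA |]. intros e He Hex.
  destruct (atom_eq_block e He) as [p [q [Hp [Hq ->]]]].
  exact (H (exist _ p Hp) (exist _ q Hq) Hex).
Qed.

Lemma rep_inj x y : (forall a b, rep x a b <-> rep y a b) -> x = y.
Proof. intro H. apply le_antisym; apply rep_le; intros a b; apply H. Qed.

Lemma rep_sup x y a b : rep (sup x y) a b <-> rep x a b \/ rep y a b.
Proof. apply atom_le_sup, rep_atom. Qed.

Lemma rep_inf x y a b : rep (inf x y) a b <-> rep x a b /\ rep y a b.
Proof.
  split.
  - intro H. split; (eapply le_trans; [exact H|]); [apply le_infl | apply le_infr].
  - intros [Hx Hy]. apply inf_glb; assumption.
Qed.

Lemma rep_comp x y a b : rep (comp x y) a b <-> exists c, rep x a c /\ rep y c b.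
Proof.
  split.
  - rewrite rep_iff. intro Hne.
    rewrite <- comp_assoc, <- (comp_assoc S x y), comp_assoc, comp_bigsup_one in Hne.
    apply bigsup_nonbot in Hne as [e [He Hne]].
    apply in_map_iff in He as [r [<- Hr]].
    exists (exist _ r (proj1 (P_spec r) Hr)). rewrite !rep_iff. simpl. split.
    + intro E. apply Hne. rewrite E. apply comp_bot_l.
    + intro E. apply Hne. rewrite (comp_assoc S r y), E. apply comp_bot_r.
  - intros [[r Hr] [Hx Hy]].
    unfold rep in *. simpl in *. rewrite <- (block_comp SI _ _ r (proj2 Hr) (proj1 (proj1 Hr))).
    apply comp_mono; assumption.
Qed.

Lemma rep_pc x a b : rep (pc x) a b <-> ~ rep x a b.
Proof. apply atom_le_pc, rep_atom. Qed.

Lemma rep_cnv x a b : rep (cnv x) a b <-> rep x b a.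
Proof.
  destruct a as [p Hp], b as [q Hq]. unfold rep. simpl.
  rewrite le_cnv_iff, block_cnv by (apply Hp || apply Hq). reflexivity.
Qed.

Lemma rep_bot a b : ~ rep bot a b.
Proof. intro H. exact (proj1 (rep_atom a b) (le_bot_eq _ H)). Qed.

Lemma rep_top a b : rep top a b.
Proof. apply le_top. Qed.

Lemma rep_one a b : rep one a b <-> a = b.
Proof.
  rewrite rep_iff, comp_one_r. destruct a as [p Hp], b as [q Hq]. simpl. split.
  - intro Hne. apply subset_eq_compat.
    assert (Hmeet : inf p q <> bot).
    { intro E. apply Hne, le_bot_eq. rewrite <- E. apply sub_comp_le_inf; [apply Hp | apply Hq]. }
    exact (proj2 (proj1 Hq) p (proj1 (proj1 Hp)) (atom_meet p q (proj1 Hp) Hmeet)).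
  - intro E. injection E as <-. rewrite sub_idem by apply Hp. apply Hp.
Qed.

Lemma representable_of_block_atoms : representable S.
Proof.
  exists (point S), (fun _ _ => True), rep.
  refine (conj rep_inj (conj rep_sup (conj rep_inf (conj rep_comp
           (conj _ (conj rep_cnv (conj _ (conj _ _)))))))).
  - intros x a b. rewrite rep_pc. tauto.
  - intros a b. split; [apply rep_bot | contradiction].
  - intros a b. split; [trivial | intros _; apply rep_top].
  - intros a b. rewrite rep_one. tauto.
Qed.

End Representation.

End SubidentityAtoms.

Arguments sup : clear implicits. Arguments inf : clear implicits.
Arguments comp : clear implicits. Arguments pc : clear implicits.
Arguments cnv : clear implicits. Arguments bot : clear implicits.
Arguments top : clear implicits. Arguments one : clear implicits.
Arguments le : clear implicits. Arguments atom : clear implicits.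

Theorem mainTheorem8 (S : StoneRA) (cnt : S -> natinf) :
  is_relation_algebra S ->
  atomic S ->
  simple_alg S ->
  finitely_many_atoms S ->
  cnt (bot S) = Fin 0 ->
  (forall x : S, atom S x -> cnt x = Fin 1) ->
  (forall x y : S, ni_add (cnt x) (cnt y) = ni_add (cnt (sup S x y)) (cnt (inf S x y))) ->
  cnt (top S) = ni_sq (cnt (one S)) ->
  atom_rectangular S /\ representable S.
Proof.
  intros RA AT SI [l Hl] cnt_bot cnt_atom cnt_modular cnt_top.
  destruct (finite_subset_NoDup subid_atom l) as [P [P_NoDup P_spec]].
  { intros p Hp. apply Hl, Hp. }
  assert (block_atom := subid_atom_block_atom RA AT P P_spec cnt SI P_NoDup
                          cnt_bot cnt_atom cnt_modular cnt_top).
  split.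
  - exact (atom_rectangular_of_block_atoms RA AT P P_spec block_atom).
  - exact (representable_of_block_atoms RA AT P P_spec SI block_atom).
Qed.
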